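(* Let $A,B\in\mathbb R^{\mathcal N\times\mathcal N}$ with $A$ invertible, and assume that among the generalized eigenvalues $\lambda\in\mathbb C$ of $Av=\lambda Bv$ there is a unique positive one $\lambda>0$ of smallest modulus, and that it is simple. Let $u,u^*$, $k$, $M$, $\tilde u^*$, $P$, $P^*$ be as in the context. Let $u_N,u_N^*\in\mathbb R^{\mathcal N}\setminus\{0\}$ and $k_N\in\mathbb R$ be such that $k_N\notin\sigma\big((PMP)|_{[\operatorname{Span}\{\tilde u^*\}]^\perp}\big)$ and $k_N\notin\sigma\big((P^*M^TP^* )|_{[\operatorname{Span}\{u\}]^\perp}\big)$. Define the residuals $R_N=(B-k_NA)u_N$ and $R_N^*=(B^T-k_NA^T)u_N^*$. Then $$\inf_{v\in\operatorname{Span}\{u\}}\|u_N-v\|\le C_N^u\|R_N\|,\qquad \inf_{v^*\in\operatorname{Span}\{u^*\}}\|u_N^*-v^*\|\le C_N^{u^*}\|R_N^*\|,$$ where $C_N^u=\|P(PMP-k_NI)^+PA^{-1}\|$ and $C_N^{u^*}=\|A^{-T}P^*(P^*M^TP^*-k_NI)^+P^*\|$.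
   Context: $\mathbb R^{\mathcal N}$ carries the Euclidean inner product $\langle\cdot,\cdot\rangle$ and norm $\|\cdot\|$; on matrices $\|\cdot\|$ is the induced operator norm. ''Simple'' means $k=1/\lambda$ is an algebraically simple eigenvalue of $M=A^{-1}B$. $u,u^*$ are unit vectors with $Au=\lambda Bu$, $A^Tu^*=\lambda B^Tu^*$; $\tilde u^*=A^Tu^*/\|A^Tu^*\|$; $P=I-\frac{u(\tilde u^* )^T}{\langle u,\tilde u^*\rangle}$, $P^*=I-\frac{\tilde u^*u^T}{\langle u,\tilde u^*\rangle}$ (here $\langle u,\tilde u^*\rangle\ne0$); $\mathbb R^{\mathcal N}=\operatorname{Span}\{u\}\oplus[\operatorname{Span}\{\tilde u^*\}]^\perp=\operatorname{Span}\{\tilde u^*\}\oplus[\operatorname{Span}\{u\}]^\perp$, and $PMP-k_NI$ leaves $[\operatorname{Span}\{\tilde u^*\}]^\perp$ invariant, $P^*M^TP^*-k_NI$ leaves $[\operatorname{Span}\{u\}]^\perp$ invariant. The operator $(PMP-k_NI)^+$ is the linear map equal to the inverse of $(PMP-k_NI)|_{[\operatorname{Span}\{\tilde u^*\}]^\perp}$ on $[\operatorname{Span}\{\tilde u^*\}]^\perp$ and equal to $0$ on $\operatorname{Span}\{u\}$; likewise $(P^*M^TP^*-k_NI)^+$ equals the inverse of $(P^*M^TP^*-k_NI)|_{[\operatorname{Span}\{u\}]^\perp}$ on $[\operatorname{Span}\{u\}]^\perp$ and $0$ on $\operatorname{Span}\{\tilde u^*\}$. $A^{-T}=(A^T)^{-1}$.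 *)

From HB Require Import structures.
From mathcomp Require Import all_boot all_order all_algebra.
From mathcomp Require Import all_classical all_reals all_analysis.
From mathcomp Require Import complex.
Set Implicit Arguments. Unset Strict Implicit. Unset Printing Implicit Defensive.
Import Order.TTheory GRing.Theory Num.Theory.
Local Open Scope ring_scope.
Local Open Scope classical_set_scope.

Definition dotv (R : realType) (n : nat) (x y : 'cV[R]_n) : R :=
  \sum_i x i 0 * y i 0.
Definition enorm (R : realType) (n : nat) (x : 'cV[R]_n) : R :=
  Num.sqrt (dotv x x).

Definition opnorm (R : realType) (n : nat) (A : 'M[R]_n) : R :=
  sup [set enorm (A *m x) | x in [set x : 'cV[R]_n | enorm x = 1]].

Definition dist_span (R : realType) (n : nat) (u x : 'cV[R]_n) : R :=
  inf [set enorm (x - a *: u) | a in [set: R]].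

Definition gen_eigenvalue (R : realType) (n : nat) (A B : 'M[R]_n) (mu : R[i]) : Prop :=
  \det (map_mx (real_complex R) A - mu *: map_mx (real_complex R) B) = 0.

Definition simple_eigenvalue (R : realType) (n : nat) (M : 'M[R]_n) (k : R) : Prop :=
  mup k (char_poly M) = 1%N.

(* X is the operator S^+ : inverse of S restricted to W = z'^perp on W,
   and 0 on Span{z} *)
Definition is_restricted_pinv (R : realType) (n : nat) (S : 'M[R]_n)
    (zperp z : 'cV[R]_n) (X : 'M[R]_n) : Prop :=
  (forall w : 'cV[R]_n, dotv zperp w = 0 ->
      dotv zperp (X *m w) = 0 /\ S *m (X *m w) = w)
  /\ X *m z = 0.

From HB Require Import structures.
From mathcomp Require Import all_boot all_order all_algebra.
From mathcomp Require Import all_classical all_reals all_analysis.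
From mathcomp Require Import complex.
Set Implicit Arguments. Unset Strict Implicit. Unset Printing Implicit Defensive.
Import Order.TTheory GRing.Theory Num.Theory.
Local Open Scope ring_scope.
Local Open Scope classical_set_scope.

(* Let N have eigenvalue k with right eigenvector p, left eigenvector q and
   <p, q> <> 0.  The oblique projector P = I - p q^T / <p, q> kills p, maps
   into q^perp and commutes with N, so P (N - kN) x = (P N P - kN) (P x) with
   P x in q^perp.  The restricted inverse X of P N P - kN therefore gives
   P X P (N - kN) x = P x = x - c p, an element of x + Span{p}.  For u take
   N = M and write (M - kN) u_N = A^-1 R_N.  For u^* take N = M^T, p = ut,
   q = u and x = A^T u^*_N, so that (M^T - kN) x = R^*_N, and apply A^-T,
   which maps ut into Span{u^*}. *)

Section Euclidean.
Variables (R : realType) (n : nat).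
Implicit Types (x y z : 'cV[R]_n) (C : 'M[R]_n).

Lemma dotvC x y : dotv x y = dotv y x.
Proof. by apply: eq_bigr => i _; rewrite mulrC. Qed.

Lemma dotvZl a x y : dotv (a *: x) y = a * dotv x y.
Proof. by rewrite /dotv mulr_sumr; apply: eq_bigr => i _; rewrite mxE mulrA. Qed.

Lemma dotvZr a x y : dotv x (a *: y) = a * dotv x y.
Proof. by rewrite dotvC dotvZl dotvC. Qed.

Lemma dotvBr x y z : dotv x (y - z) = dotv x y - dotv x z.
Proof. by rewrite /dotv -sumrB; apply: eq_bigr => i _; rewrite !mxE mulrBr. Qed.

Lemma tr_mulmx_dotv x y : x^T *m y = (dotv x y)%:M.
Proof.
apply/matrixP => i j; rewrite !ord1 !mxE /=.
by apply: eq_bigr => k _; rewrite mxE.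
Qed.

Lemma mulmx_outer x y z : x *m y^T *m z = dotv y z *: x.
Proof. by rewrite -mulmxA tr_mulmx_dotv mul_mx_scalar. Qed.

Lemma dotvv_ge0 x : 0 <= dotv x x.
Proof. by apply: sumr_ge0 => i _; rewrite -expr2 sqr_ge0. Qed.

Lemma sqr_coord_le_dotvv x i : x i 0 ^+ 2 <= dotv x x.
Proof.
rewrite /dotv (bigD1 i) //= -expr2 lerDl.
by apply: sumr_ge0 => j _; rewrite -expr2 sqr_ge0.
Qed.

Lemma enorm_ge0 x : 0 <= enorm x.
Proof. exact: sqrtr_ge0. Qed.

Lemma enormZ a x : enorm (a *: x) = `|a| * enorm x.
Proof. by rewrite /enorm dotvZl dotvZr mulrA -expr2 sqrtrM ?sqr_ge0 // sqrtr_sqr. Qed.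

Lemma enorm0 : enorm (0 : 'cV[R]_n) = 0.
Proof. by rewrite /enorm /dotv big1 ?sqrtr0 // => i _; rewrite mxE mul0r. Qed.

Lemma enorm_eq0 x : (enorm x == 0) = (x == 0).
Proof.
apply/idP/eqP => [|->]; last by rewrite enorm0.
rewrite sqrtr_eq0 => xx_le0.
have xx0 : dotv x x = 0 by apply/eqP; rewrite eq_le xx_le0 dotvv_ge0.
have sq_ge0 (i : 'I_n) : true -> 0 <= x i 0 * x i 0 by rewrite -expr2 sqr_ge0.
apply/matrixP => i j; rewrite ord1 mxE.
by have /eqP := @psumr_eq0P _ _ _ _ sq_ge0 xx0 i isT; rewrite mulf_eq0 orbb => /eqP.
Qed.

Lemma opnorm_image_has_ubound C :
  has_ubound [set enorm (C *m x) | x in [set x : 'cV[R]_n | enorm x = 1]].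
Proof.
exists (Num.sqrt (\sum_i (\sum_j `|C i j|) ^+ 2)) => _ [x /= x1 <-].
have xx1 : dotv x x = 1 by rewrite -[LHS]sqr_sqrtr ?dotvv_ge0 // -/(enorm x) x1 expr1n.
have coord_le1 j : `|x j 0| <= 1.
  by rewrite -(expr_le1 (n:=2)) // real_normK ?num_real // -xx1 sqr_coord_le_dotvv.
apply: ler_wsqrtr; apply: ler_sum => i _.
have row_le : `|(C *m x) i 0| <= \sum_j `|C i j|.
  rewrite mxE; apply: (le_trans (ler_norm_sum _ _ _)); apply: ler_sum => j _.
  by rewrite normrM -[leRHS]mulr1 ler_wpM2l.
rewrite -expr2 -real_normK ?num_real //.
by rewrite lerXn2r ?nnegrE ?sumr_ge0.
Qed.

Lemma opnormP C y : enorm (C *m y) <= opnorm C * enorm y.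
Proof.
have [y0|y_neq0] := eqVneq y 0; first by rewrite y0 mulmx0 !enorm0 mulr0.
have y_gt0 : 0 < enorm y by rewrite lt0r enorm_eq0 y_neq0 enorm_ge0.
set x := (enorm y)^-1 *: y.
have x1 : enorm x = 1 by rewrite enormZ ger0_norm ?invr_ge0 ?enorm_ge0 // mulVf ?gt_eqF.
have := ub_le_sup (opnorm_image_has_ubound C) (ex_intro2 _ _ x x1 erefl).
rewrite -/(opnorm C) /x -scalemxAr enormZ ger0_norm ?invr_ge0 ?enorm_ge0 //.
by rewrite ler_pdivrMl // mulrC.
Qed.

Lemma dist_span_le u x a : dist_span u x <= enorm (x - a *: u).
Proof.
apply: ge_inf; last by exists a.
by exists 0 => _ [b _ <-]; apply: enorm_ge0.
Qed.

Lemma dist_span_le_opnorm C r u x a :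
  C *m r = x - a *: u -> dist_span u x <= opnorm C * enorm r.
Proof. by move=> Cr; rewrite (le_trans (dist_span_le u x a)) // -Cr opnormP. Qed.

End Euclidean.

Definition oblique_proj (R : realType) (n : nat) (p q : 'cV[R]_n) : 'M[R]_n :=
  1%:M - (dotv p q)^-1 *: (p *m q^T).

Section RestrictedPinv.
Variables (R : realType) (n : nat) (S X : 'M[R]_n) (q p : 'cV[R]_n).
Hypothesis X_pinv : is_restricted_pinv S q p X.

Lemma restricted_pinv_dotv_neq0 : p != 0 -> dotv q p != 0.
Proof.
case: X_pinv => pinvP Xp0; apply: contraNneq => qp0.
by have [_ <-] := pinvP p qp0; rewrite Xp0 mulmx0.
Qed.

Lemma restricted_pinvK w :
  (forall v, dotv q v = 0 -> S *m v = 0 -> v = 0) ->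
  dotv q w = 0 -> dotv q (S *m w) = 0 -> X *m (S *m w) = w.
Proof.
case: X_pinv => pinvP _ S_inj qw0 qSw0; have [qXSw0 SXSw] := pinvP _ qSw0.
apply/eqP; rewrite -subr_eq0; apply/eqP/S_inj.
  by rewrite dotvBr qXSw0 qw0 subrr.
by rewrite mulmxBr SXSw subrr.
Qed.

End RestrictedPinv.

Section ObliqueProjector.
Variables (R : realType) (n : nat) (N : 'M[R]_n) (p q : 'cV[R]_n) (k : R).
Hypotheses (Np : N *m p = k *: p) (NTq : N^T *m q = k *: q) (pq_neq0 : dotv p q != 0).
Implicit Types (x : 'cV[R]_n).

Local Notation P := (oblique_proj p q).

Lemma oblique_projE x : P *m x = x - ((dotv p q)^-1 * dotv q x) *: p.
Proof. by rewrite mulmxBl mul1mx -scalemxAl mulmx_outer scalerA. Qed.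

Lemma dotv_oblique_proj x : dotv q (P *m x) = 0.
Proof.
by rewrite oblique_projE dotvBr dotvZr [dotv q p]dotvC mulrAC mulVf // mul1r subrr.
Qed.

Lemma oblique_proj_kernel : P *m p = 0.
Proof. by rewrite oblique_projE [dotv q p]dotvC mulVf // scale1r subrr. Qed.

Lemma oblique_proj_idem : P *m P = P.
Proof.
rewrite {2}/oblique_proj mulmxBr mulmx1 -scalemxAr mulmxA oblique_proj_kernel.
by rewrite mul0mx scaler0 subr0.
Qed.

Lemma oblique_proj_comm : P *m N = N *m P.
Proof.
have qN : q^T *m N = k *: q^T.
  by rewrite -[N]trmxK -trmx_mul NTq linearZ.
rewrite mulmxBl mulmxBr mul1mx mulmx1 -scalemxAl -scalemxAr -mulmxA qN.
by rewrite mulmxA Np -scalemxAr scalemxAl.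
Qed.

Variables (kN : R) (X : 'M[R]_n).
Hypotheses (S_inj : forall w, dotv q w = 0 -> (P *m N *m P - kN%:M) *m w = 0 -> w = 0)
  (X_pinv : is_restricted_pinv (P *m N *m P - kN%:M) q p X).

Lemma oblique_proj_shift x : P *m ((N - kN%:M) *m x) = (P *m N *m P - kN%:M) *m (P *m x).
Proof.
have PNP : P *m N *m P = P *m N.
  by rewrite -mulmxA -oblique_proj_comm mulmxA oblique_proj_idem.
rewrite PNP [in RHS]mulmxBl mul_scalar_mx [in RHS]mulmxA PNP -mulmxA scalemxAr -mulmxBr.
by rewrite [_ *m x]mulmxBl mul_scalar_mx.
Qed.

Lemma oblique_proj_pinv_residual x :
  P *m X *m P *m ((N - kN%:M) *m x) = x - ((dotv p q)^-1 * dotv q x) *: p.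
Proof.
rewrite -!mulmxA oblique_proj_shift (restricted_pinvK X_pinv S_inj).
- by rewrite mulmxA oblique_proj_idem oblique_projE.
- exact: dotv_oblique_proj.
- by rewrite -oblique_proj_shift dotv_oblique_proj.
Qed.

End ObliqueProjector.

Section GeneralizedEigenvectors.
Variables (R : realType) (n : nat) (A B : 'M[R]_n).
Hypothesis A_unit : A \in unitmx.
Implicit Types (v x : 'cV[R]_n).

Lemma gen_eigvec_invmx_mulmx (lambda : R) v :
  lambda != 0 -> A *m v = lambda *: (B *m v) -> invmx A *m B *m v = lambda^-1 *: v.
Proof.
move=> lam_neq0 Av; rewrite -mulmxA -[B *m v](scalerK lam_neq0) -Av.
by rewrite -scalemxAr mulKmx.
Qed.

Lemma gen_eigvec_mulmx_invmx (lambda : R) v :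
  lambda != 0 -> A *m v = lambda *: (B *m v) ->
  B *m invmx A *m (A *m v) = lambda^-1 *: (A *m v).
Proof.
by move=> lam_neq0 Av; rewrite -mulmxA mulKmx // Av scalerA mulVf // scale1r.
Qed.

Lemma invmx_mulmx_residual (c : R) x :
  invmx A *m ((B - c *: A) *m x) = (invmx A *m B - c%:M) *m x.
Proof.
by rewrite mulmxA mulmxBr -scalemxAr mulVmx // scalemx1.
Qed.

Lemma residual_mulmx_invmx (c : R) x :
  (B - c *: A) *m x = (B *m invmx A - c%:M) *m (A *m x).
Proof.
by rewrite mulmxA [in RHS]mulmxBl mulmxKV // mul_scalar_mx.
Qed.

End GeneralizedEigenvectors.

Theorem proposition1 (R : realType) (n : nat) (A B : 'M[R]_n) (lambda : R)
  (u us uN usN : 'cV[R]_n) (kN : R) (Xp Xps : 'M[R]_n) :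
  A \in unitmx ->
  (* lambda > 0 is the unique generalized eigenvalue of smallest modulus *)
  0 < lambda ->
  gen_eigenvalue A B (real_complex R lambda) ->
  (forall mu : R[i], gen_eigenvalue A B mu -> mu <> (real_complex R lambda) -> (real_complex R lambda) < `|mu|) ->
  let M := invmx A *m B in
  let k := lambda^-1 in
  (* ... and it is simple *)
  simple_eigenvalue M k ->
  (* right and left unit eigenvectors *)
  enorm u = 1 -> A *m u = lambda *: (B *m u) ->
  enorm us = 1 -> A^T *m us = lambda *: (B^T *m us) ->
  let ut := (enorm (A^T *m us))^-1 *: (A^T *m us) in
  let P := 1%:M - (dotv u ut)^-1 *: (u *m ut^T) in
  let Ps := 1%:M - (dotv u ut)^-1 *: (ut *m u^T) in
  uN != 0 -> usN != 0 ->
  (* kN not in the spectrum of (PMP)|_{ut^perp} nor of (P* M^T P* )|_{u^perp} *)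
  (forall w : 'cV[R]_n, dotv ut w = 0 ->
     (P *m M *m P - kN%:M) *m w = 0 -> w = 0) ->
  (forall w : 'cV[R]_n, dotv u w = 0 ->
     (Ps *m M^T *m Ps - kN%:M) *m w = 0 -> w = 0) ->
  (* Xp = (PMP - kN I)^+ , Xps = (P* M^T P* - kN I)^+ *)
  is_restricted_pinv (P *m M *m P - kN%:M) ut u Xp ->
  is_restricted_pinv (Ps *m M^T *m Ps - kN%:M) u ut Xps ->
  let RN := (B - kN *: A) *m uN in
  let RsN := (B^T - kN *: A^T) *m usN in
  dist_span u uN <= opnorm (P *m Xp *m P *m invmx A) * enorm RN /\
  dist_span us usN <= opnorm (invmx A^T *m Ps *m Xps *m Ps) * enorm RsN.
Proof.
(* The spectral hypotheses only guarantee that u and u^* exist; the bound uses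
   the eigenvector equations alone, and <u, ut> <> 0 follows from the
   existence of the restricted inverse Xp. *)
move=> A_unit lam_gt0 _ _ M k _ u1 Au _ ATus ut P Ps _ _.
move=> S_inj Ss_inj Xp_pinv Xps_pinv RN RsN.
have lam_neq0 : lambda != 0 by rewrite gt_eqF.
have Mu : M *m u = k *: u by apply: gen_eigvec_invmx_mulmx.
have MT : M^T = B^T *m invmx A^T by rewrite trmx_mul trmx_inv.
have AT_unit : A^T \in unitmx by rewrite unitmx_tr.
have MTut : M^T *m ut = k *: ut.
  rewrite /ut -scalemxAr MT (gen_eigvec_mulmx_invmx AT_unit lam_neq0 ATus).
  by rewrite scalerA mulrC -scalerA.
have u_neq0 : u != 0 by rewrite -enorm_eq0 u1 oner_neq0.
have uut_neq0 : dotv u ut != 0 by rewrite dotvC (restricted_pinv_dotv_neq0 Xp_pinv).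
have utu_neq0 : dotv ut u != 0 by rewrite dotvC.
have PsE : Ps = oblique_proj ut u by rewrite /Ps /oblique_proj dotvC.
split.
  apply: (dist_span_le_opnorm (a := (dotv u ut)^-1 * dotv ut uN)).
  have := oblique_proj_pinv_residual Mu MTut uut_neq0 S_inj Xp_pinv uN.
  by rewrite /RN -!mulmxA invmx_mulmx_residual.
rewrite PsE in Ss_inj Xps_pinv *.
have MTTu : M^T^T *m u = k *: u by rewrite trmxK.
set a := (dotv ut u)^-1 * dotv u (A^T *m usN).
apply: (dist_span_le_opnorm (a := a * (enorm (A^T *m us))^-1)).
have := oblique_proj_pinv_residual MTut MTTu utu_neq0 Ss_inj Xps_pinv (A^T *m usN).
rewrite /RsN residual_mulmx_invmx // -MT -!mulmxA => ->.
by rewrite mulmxBr mulKmx // /ut -!scalemxAr mulKmx // scalerA.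
Qed.
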